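(* Let $p\in W^{1,\infty}(\mathbb{R}^+\times\mathbb{R}^+)$ with $p\ge0$, let $\alpha:\mathbb{R}^+\to[0,\infty)$ be bounded and of bounded variation on $\mathbb{R}^+$, and let $(n^0_j)_{j\ge1}$ be nonnegative with $\|n^0\|_1<\infty$, $\|n^0\|_\infty<\infty$ and $TV(n^0)<\infty$. Then there exist $\tau_0>0$ and constants $C_1,C_2>0$, depending only on $p$, $\alpha$, $\|n^0\|_1$ and $\|n^0\|_\infty$, such that whenever $\Delta t\le\tau_0$ and the DDM CFL condition holds, the DDM upwind scheme satisfies for every $m\in\mathbb{N}$, with $T=m\Delta t$, $$TV(n^m)\le e^{C_1T}\,TV(n^0)+C_2\left(e^{C_1T}-1\right).$$
   Context: DDM upwind scheme: fix $\Delta s,\Delta t>0$; $s_j=(j-\tfrac12)\Delta s$, $j\in\{1,2,\dots\}$; $t^m=m\Delta t$; $\alpha_k=\alpha(t^k)$. For sequences, $\|u\|_1=\sum_{j\ge1}\Delta s|u_j|$, $\|u\|_\infty=\sup_j|u_j|$. Set $X^0=0$, $N^0=\sum_{j\ge1}\Delta s\,p(s_j,0)n^0_j$. For $m\ge0$: with $n^m_0:=N^m$, $n^{m+1}_j=n^m_j-\frac{\Delta t}{\Delta s}(n^m_j-n^m_{j-1})-\Delta t\,p(s_j,X^m)n^m_j$ for $j\ge1$; then $X^{m+1}\ge0$ is the (unique under the CFL condition) solution of $X^{m+1}=\frac{\Delta t}{2}\Big(\alpha_0\sum_{j\ge1}\Delta s\,p(s_j,X^{m+1})n^{m+1}_j+\sum_{k=0}^mN^k\alpha_{m+1-k}\Big)$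 and $N^{m+1}=\sum_{j\ge1}\Delta s\,p(s_j,X^{m+1})n^{m+1}_j$. DDM CFL condition: $\Delta t<\min\Big\{\big(\frac1{\Delta s}+\|p\|_\infty\big)^{-1},\ \frac{2}{\alpha_0\|\partial_Xp\|_\infty\|n^0\|_1}\Big\}$ (second term $+\infty$ if its denominator vanishes). Discrete total variation including the boundary value: $TV(n^m)=\sum_{j\ge0}|n^m_{j+1}-n^m_j|$ with $n^m_0=N^m$. *)

From Stdlib Require Import Reals Lra.
From Coquelicot Require Import Coquelicot.
Open Scope R_scope.

(* sup_{s>=0, X>=0} |p(s,X)|  (= ||p||_oo for the continuous representative) *)
Definition p_sup (p : R -> R -> R) : Rbar :=
  Lub_Rbar (fun r => exists s x, 0 <= s /\ 0 <= x /\ r = Rabs (p s x)).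

(* ||d_X p||_oo, taken as the best Lipschitz constant of p in the X variable
   (for a W^{1,oo} function on the convex domain R+ x R+ this coincides with
   ess sup |d_X p|). *)
Definition dXp_sup (p : R -> R -> R) : Rbar :=
  Lub_Rbar (fun r => exists s x y, 0 <= s /\ 0 <= x /\ 0 <= y /\ x <> y /\
                       r = Rabs (p s x - p s y) / Rabs (x - y)).

Definition W1inf (p : R -> R -> R) : Prop :=
  (exists M, forall s x, 0 <= s -> 0 <= x -> Rabs (p s x) <= M) /\
  (exists L, forall s x s' x', 0 <= s -> 0 <= x -> 0 <= s' -> 0 <= x' ->
      Rabs (p s x - p s' x') <= L * (Rabs (s - s') + Rabs (x - x'))).

Definition bounded_on_Rplus (a : R -> R) : Prop :=
  exists M, forall t, 0 <= t -> Rabs (a t) <= M.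

Definition BV_on_Rplus (a : R -> R) : Prop :=
  exists V, forall (u : nat -> R) (k : nat),
    0 <= u O -> (forall i, (i <= k)%nat -> u i <= u (S i)) ->
    sum_f_R0 (fun i => Rabs (a (u (S i)) - a (u i))) k <= V.

Definition sj (ds : R) (j : nat) : R := (INR j - 1/2) * ds.

Definition Pint (p : R -> R -> R) (ds x : R) (u : nat -> R) : R :=
  Series (fun k => ds * p (sj ds (S k)) x * u (S k)).

(* discrete total variation including the boundary value u 0, valued in
   [0, +oo] : sum_{j>=0} |u_{j+1} - u_j| *)
Definition TV (u : nat -> R) : Rbar :=
  Lim_seq (fun K => sum_f_R0 (fun j => Rabs (u (S j) - u j)) K).

(* The DDM upwind scheme, as a relation on (n, X): n m j for j >= 1 is n^m_j,
   and n m 0 is the boundary value N^m; X m is X^m. *)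
Definition DDM_scheme (p : R -> R -> R) (alpha : R -> R) (ds dt : R)
    (n0 : nat -> R) (n : nat -> nat -> R) (X : nat -> R) : Prop :=
  (forall j, (1 <= j)%nat -> n O j = n0 j) /\
  X O = 0 /\
  n O O = Pint p ds 0 (n O) /\
  (forall m j, (1 <= j)%nat ->
     n (S m) j = n m j - dt / ds * (n m j - n m (pred j))
                 - dt * p (sj ds j) (X m) * n m j) /\
  (forall m, 0 <= X (S m) /\
     X (S m) = dt / 2 * (alpha 0 * Pint p ds (X (S m)) (n (S m))
               + sum_f_R0 (fun k => n k O * alpha (INR (S m - k) * dt)) m)) /\
  (forall m, n (S m) O = Pint p ds (X (S m)) (n (S m))).

From Stdlib Require Import Reals Lra Lia.
From Coquelicot Require Import Coquelicot.
Open Scope R_scope.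

(* Write [q^m_j = p(s_j, X^m)], so that one step of the scheme reads
   [n^{m+1}_j = (1 - dt/ds - dt q^m_j) n^m_j + dt/ds n^m_{j-1}], a nonnegative combination
   under the CFL condition.  From this representation we get, for a single step:
   - l1 stability: the mass [sum ds |n_j|] does not increase, hence stays below
     [N = |N1|], and the boundary value satisfies [|N^m| <= ||p|| N];
   - a total-variation increment [TV(n^{m+1}) <= TV(n^m) + |N^{m+1} - N^m| + O(dt)],
     the error coming from the variation of [p] in [s] and from the first cell;
   - a bound [|N^{m+1} - N^m| <= O(dt) (1 + TV(n^m))], obtained by combining the
     Lipschitz dependence of [p] on [X] with the implicit equation for [X^{m+1}]; the
     bounded variation of [alpha] controls the memory term, and [dt alpha_0 G N <= 1]
     (our choice of [tau0]) absorbs the implicit part.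
   Together these give [TV(n^{m+1}) <= TV(n^m) + dt (C1 TV(n^m) + C2')], and a discrete
   Gronwall inequality concludes. *)

(* Coquelicot's linear rules for series, specialised to real scalars and sums so that they
   apply directly to goals stated with [*], [+] and [-] on [R]. *)

Lemma is_series_scal_R (c : R) (a : nat -> R) (l : R) :
  is_series a l -> is_series (fun k => c * a k) (c * l).
Proof. apply (is_series_scal c a l). Qed.

Lemma is_series_plus_R (a b : nat -> R) (la lb : R) :
  is_series a la -> is_series b lb -> is_series (fun k => a k + b k) (la + lb).
Proof. apply (is_series_plus a b la lb). Qed.

Lemma is_series_minus_R (a b : nat -> R) (la lb : R) :
  is_series a la -> is_series b lb -> is_series (fun k => a k - b k) (la - lb).
Proof. apply (is_series_minus a b la lb). Qed.

Lemma sum_f_R0_shift (f : nat -> R) (K : nat) :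
  sum_f_R0 f (S K) = f O + sum_f_R0 (fun i => f (S i)) K.
Proof. induction K; [simpl; lra|]. rewrite tech5, IHK, tech5. lra. Qed.

Lemma sum_f_R0_rev (g : nat -> R) (m : nat) :
  sum_f_R0 (fun k => g (m - k)%nat) m = sum_f_R0 g m.
Proof.
  induction m; [reflexivity|].
  rewrite sum_f_R0_shift, (sum_eq _ (fun k => g (m - k)%nat)); [|intros i _; reflexivity].
  rewrite IHm, tech5. replace (S m - 0)%nat with (S m) by lia. lra.
Qed.

Lemma is_series_sum_f_R0 (a : nat -> R) (l : R) :
  is_series a l <-> is_lim_seq (sum_f_R0 a) l.
Proof.
  split; intro H.
  - apply is_lim_seq_Reals. apply is_series_Reals. exact H.
  - apply is_series_Reals. apply is_lim_seq_Reals. exact H.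
Qed.

Lemma is_series_le (a b : nat -> R) (la lb : R) :
  (forall k, a k <= b k) -> is_series a la -> is_series b lb -> la <= lb.
Proof.
  intros Hab Ha Hb. apply is_series_sum_f_R0 in Ha. apply is_series_sum_f_R0 in Hb.
  exact (is_lim_seq_le _ _ _ _ (fun K => sum_Rle a b K (fun i _ => Hab i)) Ha Hb).
Qed.

Lemma partial_sum_le_series (a : nat -> R) (l : R) (K : nat) :
  (forall k, 0 <= a k) -> is_series a l -> sum_f_R0 a K <= l.
Proof.
  intros Ha Hl. apply is_series_sum_f_R0 in Hl.
  apply (is_lim_seq_incr_compare _ _ Hl). intro k. rewrite tech5. specialize (Ha (S k)). lra.
Qed.

Lemma series_nonneg (a : nat -> R) (l : R) : (forall k, 0 <= a k) -> is_series a l -> 0 <= l.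
Proof.
  intros Ha Hl. apply Rle_trans with (sum_f_R0 a 0); [apply Ha|].
  apply partial_sum_le_series; assumption.
Qed.

Lemma is_series_unshift (a : nat -> R) (l : R) :
  is_series (fun k => a (S k)) l -> is_series a (a O + l).
Proof.
  intro H. apply is_series_sum_f_R0. apply is_lim_seq_incr_1.
  apply (is_lim_seq_ext (fun K => a O + sum_f_R0 (fun k => a (S k)) K)).
  - intro K. symmetry. apply sum_f_R0_shift.
  - apply (is_lim_seq_plus' (fun _ => a O) _ (a O) l); [apply is_lim_seq_const|].
    apply is_series_sum_f_R0. exact H.
Qed.

Lemma is_series_unscale (c : R) (u : nat -> R) (l : R) :
  c <> 0 -> is_series (fun k => c * u k) l -> is_series u (/ c * l).
Proof.
  intros Hc H. apply (is_series_ext (fun k => / c * (c * u k))).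
  - intro k. rewrite <- Rmult_assoc, Rinv_l, Rmult_1_l by exact Hc. reflexivity.
  - apply is_series_scal_R. exact H.
Qed.

Lemma series_dominated (a b : nat -> R) (l : R) :
  (forall k, Rabs (a k) <= b k) -> is_series b l ->
  ex_series a /\ Rabs (Series a) <= l.
Proof.
  intros Hab Hb.
  assert (Habs : ex_series (fun k => Rabs (a k))).
  { apply (ex_series_le (fun k => Rabs (a k)) b); [|exists l; exact Hb].
    intro k. rewrite Rabs_Rabsolu. apply Hab. }
  split; [apply ex_series_Rabs; auto|].
  eapply Rle_trans; [apply Series_Rabs; exact Habs|].
  apply (is_series_le (fun k => Rabs (a k)) b); [|apply Series_correct; exact Habs|exact Hb].
  intro k. apply Hab.
Qed.

Lemma weighted_series_bound (ds P : R) (q b : nat -> R) (M : R) : 0 < ds ->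
  (forall j, (1 <= j)%nat -> Rabs (q j) <= P) ->
  is_series (fun k => ds * Rabs (b (S k))) M ->
  ex_series (fun k => ds * q (S k) * b (S k)) /\
  Rabs (Series (fun k => ds * q (S k) * b (S k))) <= P * M.
Proof.
  intros Hds Hq HM. apply series_dominated with (fun k => P * (ds * Rabs (b (S k)))).
  - intro k. rewrite !Rabs_mult, (Rabs_pos_eq ds) by lra.
    assert (Rabs (q (S k)) <= P) by (apply Hq; lia).
    assert (0 <= ds * Rabs (b (S k))) by (apply Rmult_le_pos; [lra|apply Rabs_pos]).
    nra.
  - apply is_series_scal_R. exact HM.
Qed.

Definition jump (u : nat -> R) (j : nat) : R := Rabs (u (S j) - u j).

Lemma jump_partial_incr (u : nat -> R) (K : nat) :
  sum_f_R0 (jump u) K <= sum_f_R0 (jump u) (S K).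
Proof. rewrite tech5. assert (0 <= jump u (S K)) by apply Rabs_pos. lra. Qed.

Lemma TV_is_series (u : nat -> R) :
  is_finite (TV u) -> is_series (jump u) (real (TV u)).
Proof.
  intro Hfin. apply is_series_sum_f_R0.
  destruct (ex_lim_seq_incr _ (jump_partial_incr u)) as [l Hl].
  assert (HTV : TV u = l) by (apply is_lim_seq_unique; exact Hl).
  rewrite HTV in Hfin |- *. rewrite Hfin. exact Hl.
Qed.

Lemma TV_nonneg (u : nat -> R) : is_finite (TV u) -> 0 <= real (TV u).
Proof. intro H. exact (series_nonneg _ _ (fun j => Rabs_pos _) (TV_is_series u H)). Qed.

Lemma TV_le_of_partial (u : nat -> R) (B : R) :
  (forall K, sum_f_R0 (jump u) K <= B) -> is_finite (TV u) /\ real (TV u) <= B.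
Proof.
  intro HB.
  destruct (ex_finite_lim_seq_incr _ B (jump_partial_incr u) HB) as [l Hl].
  change (TV u) with (Lim_seq (sum_f_R0 (jump u))).
  rewrite (is_lim_seq_unique _ _ Hl). split; [reflexivity|].
  exact (is_lim_seq_le _ _ _ _ HB Hl (is_lim_seq_const B)).
Qed.

Lemma Rabs_comb2 (c1 c2 x y : R) : 0 <= c1 -> 0 <= c2 ->
  Rabs (c1 * x + c2 * y) <= c1 * Rabs x + c2 * Rabs y.
Proof.
  intros. eapply Rle_trans; [apply Rabs_triang|].
  rewrite !Rabs_mult, (Rabs_pos_eq c1), (Rabs_pos_eq c2); lra.
Qed.

Section UpwindStep.

Variables (ds dt P : R) (q b a : nat -> R).
Hypothesis Hds : 0 < ds.
Hypothesis Hdt : 0 < dt.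
Hypothesis Hcfl : dt * (1 / ds + P) < 1.
Hypothesis Hq : forall j, (1 <= j)%nat -> 0 <= q j <= P.
Hypothesis Hupdate : forall j, (1 <= j)%nat ->
  a j = b j - dt / ds * (b j - b (pred j)) - dt * q j * b j.

Lemma courant_nonneg : 0 <= dt / ds.
Proof. apply Rdiv_le_0_compat; lra. Qed.

Lemma upwind_diag_nonneg (j : nat) : (1 <= j)%nat -> 0 <= 1 - dt / ds - dt * q j.
Proof.
  intro Hj. destruct (Hq j Hj) as [_ HqP].
  assert (dt * q j <= dt * P) by (apply Rmult_le_compat_l; lra).
  assert (dt * (1 / ds + P) = dt / ds + dt * P) by (field; lra). lra.
Qed.

Lemma upwind_convex (j : nat) : (1 <= j)%nat ->
  a j = (1 - dt / ds - dt * q j) * b j + dt / ds * b (pred j).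
Proof. intro Hj. rewrite (Hupdate j Hj). ring. Qed.

Lemma upwind_mass_termwise (k : nat) :
  ds * Rabs (a (S k)) <= ds * Rabs (b (S k)) - dt * Rabs (b (S k))
                         - dt * (ds * q (S k) * Rabs (b (S k))) + dt * Rabs (b k).
Proof.
  rewrite upwind_convex by lia. simpl pred.
  assert (Hcomb := Rabs_comb2 _ _ (b (S k)) (b k) (upwind_diag_nonneg (S k) ltac:(lia))
                     courant_nonneg).
  apply Rle_trans with
    (ds * ((1 - dt / ds - dt * q (S k)) * Rabs (b (S k)) + dt / ds * Rabs (b k))).
  - apply Rmult_le_compat_l; lra.
  - right. field. lra.
Qed.

Lemma upwind_mass (M : R) :
  is_series (fun k => ds * Rabs (b (S k))) M ->
  b O = Series (fun k => ds * q (S k) * b (S k)) ->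
  exists M', is_series (fun k => ds * Rabs (a (S k))) M' /\ M' <= M.
Proof.
  intros HM Hb0.
  assert (Hqk : forall k, 0 <= q (S k) <= P) by (intro; apply Hq; lia).
  destruct (series_dominated (fun k => ds * q (S k) * Rabs (b (S k)))
              (fun k => P * (ds * Rabs (b (S k)))) (P * M)) as [Ew _].
  { intro k. destruct (Hqk k) as [Hq0 HqP]. assert (0 <= Rabs (b (S k))) by apply Rabs_pos.
    rewrite Rabs_pos_eq by (apply Rmult_le_pos; [apply Rmult_le_pos|]; lra).
    assert (0 <= ds * Rabs (b (S k))) by (apply Rmult_le_pos; lra). nra. }
  { apply is_series_scal_R. exact HM. }
  set (w := Series (fun k => ds * q (S k) * Rabs (b (S k)))).
  assert (Hw : is_series (fun k => ds * q (S k) * Rabs (b (S k))) w)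
    by (apply Series_correct; exact Ew).
  assert (Hbw : Rabs (b O) <= w).
  { rewrite Hb0. apply (series_dominated _ (fun k => ds * q (S k) * Rabs (b (S k))) w); [|exact Hw].
    intro k. specialize (Hqk k).
    rewrite !Rabs_mult, (Rabs_pos_eq ds), (Rabs_pos_eq (q (S k))) by lra. lra. }
  assert (HbS : is_series (fun k => Rabs (b (S k))) (/ ds * M))
    by (apply is_series_unscale; [lra|exact HM]).
  assert (Hb : is_series (fun k => Rabs (b k)) (Rabs (b O) + / ds * M))
    by (apply (is_series_unshift (fun k => Rabs (b k))); exact HbS).
  set (c := fun k => ds * Rabs (b (S k)) - dt * Rabs (b (S k))
                     - dt * (ds * q (S k) * Rabs (b (S k))) + dt * Rabs (b k)).
  assert (Hc : is_series c (M - dt * (/ ds * M) - dt * w + dt * (Rabs (b O) + / ds * M))).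
  { apply is_series_plus_R; [apply is_series_minus_R; [apply is_series_minus_R|]|].
    - exact HM.
    - apply is_series_scal_R. exact HbS.
    - apply is_series_scal_R. exact Hw.
    - apply is_series_scal_R. exact Hb. }
  assert (Hdom : forall k, Rabs (ds * Rabs (a (S k))) <= c k).
  { intro k. rewrite Rabs_pos_eq by (apply Rmult_le_pos; [lra|apply Rabs_pos]).
    apply upwind_mass_termwise. }
  destruct (series_dominated _ _ _ Hdom Hc) as [Ea _].
  exists (Series (fun k => ds * Rabs (a (S k)))). split; [apply Series_correct; exact Ea|].
  eapply Rle_trans.
  - apply (is_series_le (fun k => ds * Rabs (a (S k))) c);
      [|apply Series_correct; exact Ea|exact Hc].
    intro k. eapply Rle_trans; [apply Rle_abs|apply Hdom].
  - assert (dt * Rabs (b O) <= dt * w) by (apply Rmult_le_compat_l; lra). lra.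
Qed.

Lemma upwind_tv_partial (L : R) : 0 <= L ->
  (forall j, (1 <= j)%nat -> Rabs (q (S j) - q j) <= L * ds) ->
  forall K, sum_f_R0 (jump a) K <=
    sum_f_R0 (jump b) K - dt / ds * jump b K + Rabs (a O - b O)
    + dt * P * Rabs (b 1%nat)
    + dt * L * (sum_f_R0 (fun i => ds * Rabs (b i)) K - ds * Rabs (b O)).
Proof.
  intros HL HqL.
  induction K as [|K IHK]; unfold jump in *; simpl sum_f_R0 in *.
  - rewrite (Hupdate 1%nat) by lia. simpl pred.
    destruct (Hq 1%nat) as [Hq0 HqP]; [lia|].
    assert (Hdiag := upwind_diag_nonneg 1 ltac:(lia)).
    assert (Hdq : 0 <= dt * q 1%nat) by (apply Rmult_le_pos; lra).
    replace (b 1%nat - dt / ds * (b 1%nat - b O) - dt * q 1%nat * b 1%nat - a O) with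
      ((1 - dt / ds) * (b 1%nat - b O) + (b O - a O) + - (dt * q 1%nat * b 1%nat)) by ring.
    assert (Hq1 : Rabs (dt * q 1%nat * b 1%nat) <= dt * P * Rabs (b 1%nat)).
    { rewrite !Rabs_mult, (Rabs_pos_eq dt), (Rabs_pos_eq (q 1%nat)) by lra.
      apply Rmult_le_compat_r; [apply Rabs_pos|]. apply Rmult_le_compat_l; lra. }
    assert (Hd : Rabs ((1 - dt / ds) * (b 1%nat - b O)) = (1 - dt / ds) * Rabs (b 1%nat - b O))
      by (rewrite Rabs_mult, Rabs_pos_eq by lra; reflexivity).
    assert (H := Rabs_triang ((1 - dt / ds) * (b 1%nat - b O) + (b O - a O))
                             (- (dt * q 1%nat * b 1%nat))).
    assert (H' := Rabs_triang ((1 - dt / ds) * (b 1%nat - b O)) (b O - a O)).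
    rewrite Rabs_Ropp in H. rewrite (Rabs_minus_sym (b O)) in H'. lra.
  - rewrite (Hupdate (S (S K))), (Hupdate (S K)) by lia. simpl pred.
    assert (Hco := upwind_diag_nonneg (S (S K)) ltac:(lia)).
    replace (b (S (S K)) - dt / ds * (b (S (S K)) - b (S K)) - dt * q (S (S K)) * b (S (S K)) -
      (b (S K) - dt / ds * (b (S K) - b K) - dt * q (S K) * b (S K))) with
      ((1 - dt / ds - dt * q (S (S K))) * (b (S (S K)) - b (S K)) + dt / ds * (b (S K) - b K)
        + - (dt * (q (S (S K)) - q (S K)) * b (S K))) by ring.
    assert (Hc := Rabs_comb2 _ _ (b (S (S K)) - b (S K)) (b (S K) - b K) Hco courant_nonneg).
    assert (Hvar : Rabs (dt * (q (S (S K)) - q (S K)) * b (S K)) <= dt * (L * ds) * Rabs (b (S K))).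
    { rewrite !Rabs_mult, (Rabs_pos_eq dt) by lra.
      apply Rmult_le_compat_r; [apply Rabs_pos|]. apply Rmult_le_compat_l; [lra|]. apply HqL. lia. }
    assert (H := Rabs_triang ((1 - dt / ds - dt * q (S (S K))) * (b (S (S K)) - b (S K))
                 + dt / ds * (b (S K) - b K)) (- (dt * (q (S (S K)) - q (S K)) * b (S K)))).
    rewrite Rabs_Ropp in H.
    assert (0 <= dt * q (S (S K)) * Rabs (b (S (S K)) - b (S K))).
    { destruct (Hq (S (S K))) as [Hq0 _]; [lia|].
      apply Rmult_le_pos; [apply Rmult_le_pos|apply Rabs_pos]; lra. }
    lra.
Qed.

Lemma upwind_tv (L T M : R) : 0 <= L ->
  (forall j, (1 <= j)%nat -> Rabs (q (S j) - q j) <= L * ds) ->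
  is_series (jump b) T -> is_series (fun k => ds * Rabs (b (S k))) M ->
  is_finite (TV a) /\
  real (TV a) <= T + Rabs (a O - b O) + dt * P * Rabs (b 1%nat) + dt * L * M.
Proof.
  intros HL HqL HT HM. apply TV_le_of_partial. intro K.
  assert (H := upwind_tv_partial L HL HqL K).
  assert (Hcell : forall k, 0 <= ds * Rabs (b (S k)))
    by (intro k; apply Rmult_le_pos; [lra|apply Rabs_pos]).
  assert (sum_f_R0 (jump b) K <= T) by exact (partial_sum_le_series _ _ K (fun j => Rabs_pos _) HT).
  assert (0 <= dt / ds * jump b K) by (apply Rmult_le_pos; [apply courant_nonneg|apply Rabs_pos]).
  assert (Hmass : sum_f_R0 (fun i => ds * Rabs (b i)) K - ds * Rabs (b O) <= M).
  { destruct K as [|K].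
    - simpl sum_f_R0. assert (0 <= M) by exact (series_nonneg _ _ Hcell HM). lra.
    - rewrite sum_f_R0_shift.
      assert (sum_f_R0 (fun i => ds * Rabs (b (S i))) K <= M)
        by exact (partial_sum_le_series _ _ K Hcell HM).
      lra. }
  assert (dt * L * (sum_f_R0 (fun i => ds * Rabs (b i)) K - ds * Rabs (b O)) <= dt * L * M)
    by (apply Rmult_le_compat_l; [apply Rmult_le_pos|]; lra).
  lra.
Qed.

Lemma upwind_boundary_diff (q' : nat -> R) (G dX M M' T : R) : 0 <= dX ->
  (forall j, (1 <= j)%nat -> Rabs (q' j) <= P) ->
  (forall j, (1 <= j)%nat -> Rabs (q' j - q j) <= G * dX) ->
  is_series (fun k => ds * Rabs (a (S k))) M' ->
  is_series (fun k => ds * Rabs (b (S k))) M ->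
  is_series (jump b) T ->
  Rabs (Series (fun k => ds * q' (S k) * a (S k)) - Series (fun k => ds * q (S k) * b (S k)))
    <= G * dX * M' + P * dt * T + P * dt * P * M.
Proof.
  intros HdX Hq' Hqq HM' HM HT.
  assert (Hqa : forall j, (1 <= j)%nat -> Rabs (q j) <= P)
    by (intros j Hj; destruct (Hq j Hj); rewrite Rabs_pos_eq; lra).
  destruct (weighted_series_bound ds P q' a M' Hds Hq' HM') as [E1 _].
  destruct (weighted_series_bound ds P q b M Hds Hqa HM) as [E2 _].
  rewrite <- Series_minus by assumption.
  apply series_dominated with
    (fun k => G * dX * (ds * Rabs (a (S k))) + P * dt * jump b k
              + P * dt * P * (ds * Rabs (b (S k)))).
  2: { apply is_series_plus_R; [apply is_series_plus_R|]; apply is_series_scal_R; assumption. }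
  intro k. assert (HA := Hupdate (S k) ltac:(lia)). simpl pred in HA.
  set (x := b (S k)) in *. set (y := b k) in *. set (r := q (S k)) in *.
  set (r' := q' (S k)). set (z := a (S k)) in *.
  assert (H1 : Rabs (r' - r) <= G * dX) by (apply Hqq; lia).
  assert (H2 : 0 <= r <= P) by (apply Hq; lia).
  replace (ds * r' * z - ds * r * x) with
    (ds * (r' - r) * z + (ds * r) * (- (dt / ds) * (x - y) + - (dt * r) * x)) by (rewrite HA; ring).
  eapply Rle_trans; [apply Rabs_triang|].
  rewrite !Rabs_mult, (Rabs_pos_eq ds), (Rabs_pos_eq r) by lra.
  assert (H3 : Rabs (- (dt / ds) * (x - y) + - (dt * r) * x)
               <= dt / ds * Rabs (x - y) + dt * P * Rabs x).
  { eapply Rle_trans; [apply Rabs_triang|].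
    rewrite !Rabs_mult, !Rabs_Ropp, (Rabs_pos_eq (dt / ds)), (Rabs_pos_eq (dt * r))
      by (apply courant_nonneg || (apply Rmult_le_pos; lra)).
    assert (dt * r * Rabs x <= dt * P * Rabs x)
      by (apply Rmult_le_compat_r; [apply Rabs_pos|apply Rmult_le_compat_l; lra]).
    lra. }
  assert (H4 : ds * r * Rabs (- (dt / ds) * (x - y) + - (dt * r) * x)
               <= P * dt * Rabs (x - y) + P * dt * P * (ds * Rabs x)).
  { assert (0 <= dt / ds * Rabs (x - y) + dt * P * Rabs x).
    { assert (0 <= Rabs (x - y)) by apply Rabs_pos. assert (0 <= Rabs x) by apply Rabs_pos.
      assert (0 <= dt / ds) by apply courant_nonneg.
      assert (0 <= dt * P) by (apply Rmult_le_pos; lra). nra. }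
    apply Rle_trans with (ds * P * (dt / ds * Rabs (x - y) + dt * P * Rabs x));
      [|right; field; lra].
    apply Rle_trans with (ds * r * (dt / ds * Rabs (x - y) + dt * P * Rabs x)).
    - apply Rmult_le_compat_l; [apply Rmult_le_pos|]; lra.
    - apply Rmult_le_compat_r; [|apply Rmult_le_compat_l]; lra. }
  assert (H5 : ds * Rabs (r' - r) * Rabs z <= G * dX * (ds * Rabs z)).
  { replace (G * dX * (ds * Rabs z)) with (ds * (G * dX) * Rabs z) by ring.
    apply Rmult_le_compat_r; [apply Rabs_pos|]. apply Rmult_le_compat_l; lra. }
  unfold jump. fold x y. lra.
Qed.

End UpwindStep.

Lemma Lub_Rbar_bounded (E : R -> Prop) (M x0 : R) : E x0 -> (forall r, E r -> r <= M) ->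
  (forall r, E r -> r <= real (Lub_Rbar E)) /\ real (Lub_Rbar E) <= M.
Proof.
  intros H0 HM. destruct (Lub_Rbar_correct E) as [Hub Hlub].
  assert (Hle : Rbar_le (Lub_Rbar E) M) by (apply Hlub; intros r Hr; apply HM; exact Hr).
  assert (Hge : Rbar_le x0 (Lub_Rbar E)) by (apply Hub; exact H0).
  destruct (Lub_Rbar E) as [l| |]; simpl in *; try contradiction.
  split; [exact Hub|exact Hle].
Qed.

Lemma W1inf_lipschitz (p : R -> R -> R) : W1inf p ->
  exists L, 0 <= L /\ forall s x s' x', 0 <= s -> 0 <= x -> 0 <= s' -> 0 <= x' ->
    Rabs (p s x - p s' x') <= L * (Rabs (s - s') + Rabs (x - x')).
Proof.
  intros [_ [L HL]]. exists (Rabs L). split; [apply Rabs_pos|].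
  intros s x s' x' Hs Hx Hs' Hx'. eapply Rle_trans; [apply HL; assumption|].
  apply Rmult_le_compat_r; [|apply Rle_abs].
  assert (0 <= Rabs (s - s')) by apply Rabs_pos. assert (0 <= Rabs (x - x')) by apply Rabs_pos. lra.
Qed.

Lemma p_sup_spec (p : R -> R -> R) : W1inf p ->
  0 <= real (p_sup p) /\
  forall s x, 0 <= s -> 0 <= x -> Rabs (p s x) <= real (p_sup p).
Proof.
  intros [[M HM] _].
  destruct (Lub_Rbar_bounded (fun r => exists s x, 0 <= s /\ 0 <= x /\ r = Rabs (p s x)) M
              (Rabs (p 0 0))) as [Hub _].
  - exists 0, 0. repeat split; lra.
  - intros r (s & x & Hs & Hx & ->). apply HM; assumption.
  - unfold p_sup. split.
    + eapply Rle_trans; [apply Rabs_pos|]. apply Hub. exists 0, 0. repeat split; lra.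
    + intros s x Hs Hx. apply Hub. exists s, x. repeat split; assumption.
Qed.

Lemma dXp_sup_spec (p : R -> R -> R) : W1inf p ->
  0 <= real (dXp_sup p) /\
  forall s x y, 0 <= s -> 0 <= x -> 0 <= y ->
    Rabs (p s x - p s y) <= real (dXp_sup p) * Rabs (x - y).
Proof.
  intro HW. destruct (W1inf_lipschitz p HW) as [L [_ HL]].
  destruct (Lub_Rbar_bounded (fun r => exists s x y, 0 <= s /\ 0 <= x /\ 0 <= y /\ x <> y /\
              r = Rabs (p s x - p s y) / Rabs (x - y)) L (Rabs (p 0 0 - p 0 1) / Rabs (0 - 1)))
    as [Hub _].
  - exists 0, 0, 1. repeat split; lra.
  - intros r (s & x & y & Hs & Hx & Hy & Hxy & ->).
    assert (0 < Rabs (x - y)) by (apply Rabs_pos_lt; lra).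
    apply Rmult_le_reg_r with (Rabs (x - y)); [assumption|].
    unfold Rdiv. rewrite Rmult_assoc, Rinv_l, Rmult_1_r by lra.
    eapply Rle_trans; [apply HL; assumption|].
    replace (s - s) with 0 by ring. rewrite Rabs_R0. lra.
  - unfold dXp_sup. split.
    + eapply Rle_trans; [|apply Hub; exists 0, 0, 1; repeat split; lra].
      apply Rdiv_le_0_compat; [apply Rabs_pos|apply Rabs_pos_lt; lra].
    + intros s x y Hs Hx Hy. destruct (Req_dec x y) as [->|Hxy].
      * unfold Rminus. rewrite !Rplus_opp_r, Rabs_R0. lra.
      * assert (0 < Rabs (x - y)) by (apply Rabs_pos_lt; lra).
        assert (Hr := Hub (Rabs (p s x - p s y) / Rabs (x - y))
                        ltac:(exists s, x, y; repeat split; assumption)).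
        apply Rmult_le_compat_r with (r := Rabs (x - y)) in Hr; [|lra].
        unfold Rdiv in Hr. rewrite Rmult_assoc, Rinv_l, Rmult_1_r in Hr by lra. exact Hr.
Qed.

Lemma bounded_on_Rplus_nonneg (a : R -> R) : bounded_on_Rplus a ->
  exists B, 0 <= B /\ forall t, 0 <= t -> Rabs (a t) <= B.
Proof.
  intros [B HB]. exists (Rabs B). split; [apply Rabs_pos|].
  intros t Ht. eapply Rle_trans; [apply HB; exact Ht|apply Rle_abs].
Qed.

Lemma BV_on_Rplus_nonneg (a : R -> R) : BV_on_Rplus a ->
  exists V, 0 <= V /\ forall (u : nat -> R) (k : nat),
    0 <= u O -> (forall i, (i <= k)%nat -> u i <= u (S i)) ->
    sum_f_R0 (fun i => Rabs (a (u (S i)) - a (u i))) k <= V.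
Proof.
  intros [V HV]. exists (Rabs V). split; [apply Rabs_pos|].
  intros u k Hu Hmono. eapply Rle_trans; [apply HV; assumption|apply Rle_abs].
Qed.

Lemma sj_nonneg (ds : R) (j : nat) : 0 < ds -> (1 <= j)%nat -> 0 <= sj ds j.
Proof.
  intros Hds Hj. unfold sj. apply Rmult_le_pos; [|lra].
  apply le_INR in Hj. simpl in Hj. lra.
Qed.

Lemma sj_S (ds : R) (j : nat) : sj ds (S j) - sj ds j = ds.
Proof. unfold sj. rewrite S_INR. ring. Qed.

(* Bounded variation of [alpha] controls the change of the memory term
   [sum_{k<=m} N_k alpha((m+1-k) dt)] when [m] increases by one: after reversing the
   summation order the differences telescope along the grid [dt, 2 dt, ...]. *)
Lemma memory_shift_bound (alpha : R -> R) (Nk : nat -> R) (dt c V : R) (m : nat) :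
  0 < dt -> 0 <= c -> (forall k, Rabs (Nk k) <= c) ->
  (forall (u : nat -> R) (k : nat), 0 <= u O -> (forall i, (i <= k)%nat -> u i <= u (S i)) ->
    sum_f_R0 (fun i => Rabs (alpha (u (S i)) - alpha (u i))) k <= V) ->
  Rabs (sum_f_R0 (fun k => Nk k * alpha (INR (S (S m) - k) * dt)) m
        - sum_f_R0 (fun k => Nk k * alpha (INR (S m - k) * dt)) m) <= c * V.
Proof.
  intros Hdt Hc HN HV. rewrite <- minus_sum.
  eapply Rle_trans; [apply sum_f_R0_triangle|].
  set (g := fun i => Rabs (alpha (INR (S (S i)) * dt) - alpha (INR (S i) * dt))).
  apply Rle_trans with (sum_f_R0 (fun k => g (m - k)%nat * c) m).
  - apply sum_Rle. intros k Hk. rewrite <- Rmult_minus_distr_l, Rabs_mult.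
    unfold g. replace (S (S (m - k))) with (S (S m) - k)%nat by lia.
    replace (S (m - k)) with (S m - k)%nat by lia.
    rewrite (Rmult_comm _ c). apply Rmult_le_compat_r; [apply Rabs_pos|apply HN].
  - rewrite <- scal_sum, sum_f_R0_rev. apply Rmult_le_compat_l; [exact Hc|].
    apply (HV (fun i => INR (S i) * dt) m).
    + apply Rmult_le_pos; [apply pos_INR|lra].
    + intros i _. apply Rmult_le_compat_r; [lra|]. rewrite (S_INR (S i)). lra.
Qed.

(* Discrete Gronwall inequality: [u_{m+1} <= u_m + dt (c u_m + e)] gives
   [u_m <= e^{c m dt} u_0 + e/c (e^{c m dt} - 1)], using [1 + c dt <= e^{c dt}]. *)
Lemma discrete_gronwall (u : nat -> R) (c e dt : R) :
  0 < c -> 0 <= e -> 0 <= dt -> 0 <= u O ->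
  (forall m, u (S m) <= u m + dt * (c * u m + e)) ->
  forall m, u m <= exp (c * (INR m * dt)) * u O + e / c * (exp (c * (INR m * dt)) - 1).
Proof.
  intros Hc He Hdt Hu0 Hstep m.
  induction m as [|m IH].
  - simpl INR. rewrite Rmult_0_l, Rmult_0_r, exp_0. lra.
  - set (E := exp (c * (INR m * dt))) in *.
    assert (HE0 : 0 < E) by apply exp_pos.
    assert (HES : exp (c * (INR (S m) * dt)) = E * exp (c * dt))
      by (unfold E; rewrite <- exp_plus, S_INR; f_equal; ring).
    assert (Hexp : 1 + c * dt <= exp (c * dt)).
    { destruct Hdt as [Hdt|<-]; [left; apply exp_ineq1; nra|rewrite Rmult_0_r, exp_0; lra]. }
    set (d := e / c) in *. assert (Hd : 0 <= d) by (apply Rdiv_le_0_compat; lra).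
    assert (He_eq : e = c * d) by (unfold d; field; lra).
    rewrite HES. eapply Rle_trans; [apply Hstep|]. rewrite He_eq.
    assert (Hc1 : 0 <= c * dt) by nra.
    assert (H1 : (u m) * (1 + c * dt) <= (E * u O + d * (E - 1)) * (1 + c * dt))
      by (apply Rmult_le_compat_r; lra).
    assert (H2 : u O * (E * (1 + c * dt)) <= u O * (E * exp (c * dt)))
      by (apply Rmult_le_compat_l; [|apply Rmult_le_compat_l]; lra).
    assert (H3 : d * (E * (1 + c * dt)) <= d * (E * exp (c * dt)))
      by (apply Rmult_le_compat_l; [|apply Rmult_le_compat_l]; lra).
    nra.
Qed.

(* Constants of the one-step estimates, in terms of [P = ||p||], [G = ||d_X p||],
   [L] (Lipschitz constant of p in s), [A = alpha 0], [B = ||alpha||], [V = TV(alpha)]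
   and the mass bound [N]. *)
Definition memory_source (P A B V N : R) : R := P * N * (A + B + V).
Definition tv_rate (P G A N : R) : R := G * N * A * P + 2 * P + 1.
Definition tv_source (P G L A B V N : R) : R :=
  G * N * A * P * P * N + G * N * memory_source P A B V N + 2 * P * P * N + L * N + 1.

Lemma tv_rate_pos (P G A N : R) : 0 <= P -> 0 <= G -> 0 <= A -> 0 <= N -> 0 < tv_rate P G A N.
Proof.
  intros. unfold tv_rate. assert (0 <= G * N * A * P) by (repeat apply Rmult_le_pos; assumption).
  lra.
Qed.

Lemma tv_source_pos (P G L A B V N : R) : 0 <= P -> 0 <= G -> 0 <= L -> 0 <= A ->
  0 <= B -> 0 <= V -> 0 <= N -> 0 < tv_source P G L A B V N.
Proof.
  intros. unfold tv_source, memory_source.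
  assert (0 <= G * N * A * P * P * N) by (repeat apply Rmult_le_pos; assumption).
  assert (0 <= G * N * (P * N * (A + B + V))) by (repeat apply Rmult_le_pos; lra).
  assert (0 <= P * P * N) by (repeat apply Rmult_le_pos; assumption).
  assert (0 <= L * N) by (apply Rmult_le_pos; assumption). lra.
Qed.

Section DDMEstimates.

Variables (p : R -> R -> R) (alpha : R -> R) (ds dt : R) (n0 : nat -> R)
          (n : nat -> nat -> R) (X : nat -> R) (P G L B V N : R).
Hypothesis Hscheme : DDM_scheme p alpha ds dt n0 n X.
Hypothesis Hds : 0 < ds.
Hypothesis Hdt : 0 < dt.
Hypothesis Hdt1 : dt <= 1.
Hypothesis Hcfl : dt * (1 / ds + P) < 1.
Hypothesis Hdt_memory : dt * (alpha 0 * G * N) <= 1.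
Hypothesis Hp_nonneg : forall s x, 0 <= s -> 0 <= x -> 0 <= p s x.
Hypothesis Hp_bound : forall s x, 0 <= s -> 0 <= x -> Rabs (p s x) <= P.
Hypothesis Hp_lipX : forall s x y, 0 <= s -> 0 <= x -> 0 <= y ->
  Rabs (p s x - p s y) <= G * Rabs (x - y).
Hypothesis Hp_lip : forall s x s' x', 0 <= s -> 0 <= x -> 0 <= s' -> 0 <= x' ->
  Rabs (p s x - p s' x') <= L * (Rabs (s - s') + Rabs (x - x')).
Hypothesis Halpha_nonneg : forall t, 0 <= t -> 0 <= alpha t.
Hypothesis Halpha_bound : forall t, 0 <= t -> Rabs (alpha t) <= B.
Hypothesis Halpha_BV : forall (u : nat -> R) (k : nat),
  0 <= u O -> (forall i, (i <= k)%nat -> u i <= u (S i)) ->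
  sum_f_R0 (fun i => Rabs (alpha (u (S i)) - alpha (u i))) k <= V.
Hypotheses (HP : 0 <= P) (HG : 0 <= G) (HL : 0 <= L) (HB : 0 <= B) (HV : 0 <= V) (HN : 0 <= N).
Hypothesis Hn0_summable : ex_series (fun k => ds * Rabs (n0 (S k))).
Hypothesis Hn0_mass : Series (fun k => ds * Rabs (n0 (S k))) <= N.

Let A := alpha 0.
Let q (m j : nat) : R := p (sj ds j) (X m).
Let memory (m : nat) : R := sum_f_R0 (fun k => n k O * alpha (INR (S m - k) * dt)) m.

Lemma X_nonneg (m : nat) : 0 <= X m.
Proof.
  destruct Hscheme as (_ & HX0 & _ & _ & HX & _).
  destruct m as [|m]; [rewrite HX0; lra|apply HX].
Qed.

Lemma A_nonneg : 0 <= A.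
Proof. apply Halpha_nonneg. lra. Qed.

Lemma q_range (m j : nat) : (1 <= j)%nat -> 0 <= q m j <= P.
Proof.
  intro Hj. assert (Hs := sj_nonneg ds j Hds Hj). assert (HX := X_nonneg m).
  split; [apply Hp_nonneg; assumption|].
  eapply Rle_trans; [apply Rle_abs|apply Hp_bound; assumption].
Qed.

Lemma q_abs (m j : nat) : (1 <= j)%nat -> Rabs (q m j) <= P.
Proof. intro Hj. destruct (q_range m j Hj). rewrite Rabs_pos_eq; lra. Qed.

Lemma q_lip_cell (m j : nat) : (1 <= j)%nat -> Rabs (q m (S j) - q m j) <= L * ds.
Proof.
  intro Hj. unfold q. eapply Rle_trans.
  - apply Hp_lip; [apply sj_nonneg; lia + assumption|apply X_nonneg|apply sj_nonneg|apply X_nonneg];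
      assumption.
  - unfold Rminus at 2. rewrite Rplus_opp_r, Rabs_R0, Rplus_0_r, sj_S, Rabs_pos_eq; lra.
Qed.

Lemma q_lip_time (m m' j : nat) : (1 <= j)%nat ->
  Rabs (q m' j - q m j) <= G * Rabs (X m' - X m).
Proof. intro Hj. apply Hp_lipX; [apply sj_nonneg|apply X_nonneg|apply X_nonneg]; assumption. Qed.

Lemma scheme_update (m j : nat) : (1 <= j)%nat ->
  n (S m) j = n m j - dt / ds * (n m j - n m (pred j)) - dt * q m j * n m j.
Proof. apply Hscheme. Qed.

Lemma boundary_as_series (m : nat) :
  n m O = Series (fun k => ds * q m (S k) * n m (S k)).
Proof.
  destruct Hscheme as (_ & HX0 & HN0 & _ & _ & HNS). unfold q.
  destruct m as [|m]; [rewrite HN0, HX0|rewrite HNS]; reflexivity.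
Qed.

Lemma X_recursion (m : nat) : X (S m) = dt / 2 * (A * n (S m) O + memory m).
Proof.
  destruct Hscheme as (_ & _ & _ & _ & HX & HNS).
  destruct (HX m) as [_ ->]. rewrite <- HNS. reflexivity.
Qed.

Lemma mass_bound (m : nat) :
  exists M, is_series (fun k => ds * Rabs (n m (S k))) M /\ M <= N.
Proof.
  induction m as [|m [M [HM HMN]]].
  - exists (Series (fun k => ds * Rabs (n0 (S k)))). split; [|exact Hn0_mass].
    apply (is_series_ext (fun k => ds * Rabs (n0 (S k))));
      [|apply Series_correct; exact Hn0_summable].
    intro k. destruct Hscheme as [Hinit _]. rewrite Hinit by lia. reflexivity.
  destruct (upwind_mass ds dt P (q m) (n m) (n (S m)) Hds Hdt Hcfl (q_range m)
              (scheme_update m) M HM (boundary_as_series m)) as [M' [HM' HM'M]].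
  exists M'. split; [exact HM'|lra].
Qed.

Lemma boundary_bound (m : nat) : Rabs (n m O) <= P * N.
Proof.
  destruct (mass_bound m) as [M [HM HMN]]. rewrite boundary_as_series.
  destruct (weighted_series_bound ds P (q m) (n m) M Hds (q_abs m) HM) as [_ H].
  eapply Rle_trans; [exact H|]. apply Rmult_le_compat_l; assumption.
Qed.

Lemma memory_increment (m : nat) : Rabs (memory (S m) - memory m) <= P * N * (B + V).
Proof.
  unfold memory. rewrite tech5. replace (S (S m) - S m)%nat with 1%nat by lia.
  assert (Hshift := memory_shift_bound alpha (fun k => n k O) dt (P * N) V m Hdt
                      (Rmult_le_pos _ _ HP HN) boundary_bound Halpha_BV).
  assert (Hlast : Rabs (n (S m) O * alpha (INR 1 * dt)) <= P * N * B).
  { rewrite Rabs_mult. apply Rmult_le_compat; try apply Rabs_pos; [apply boundary_bound|].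
    apply Halpha_bound. simpl. lra. }
  set (s1 := sum_f_R0 (fun k => n k O * alpha (INR (S (S m) - k) * dt)) m) in *.
  set (s0 := sum_f_R0 (fun k => n k O * alpha (INR (S m - k) * dt)) m) in *.
  replace (s1 + n (S m) O * alpha (INR 1 * dt) - s0) with
    ((s1 - s0) + n (S m) O * alpha (INR 1 * dt)) by ring.
  eapply Rle_trans; [apply Rabs_triang|]. lra.
Qed.

Lemma X_increment (m : nat) :
  Rabs (X (S m) - X m) <= dt / 2 * (A * Rabs (n (S m) O - n m O) + memory_source P A B V N).
Proof.
  assert (Hdt2 : 0 <= dt / 2) by lra. assert (HA := A_nonneg).
  assert (Hbdry := boundary_bound). unfold memory_source.
  destruct m as [|m].
  - destruct Hscheme as (_ & HX0 & _).
    rewrite X_recursion, HX0. unfold memory. simpl sum_f_R0.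
    replace (dt / 2 * (A * n 1%nat O + n O O * alpha (1 * dt)) - 0) with
      (dt / 2 * (A * (n 1%nat O - n O O) + (A * n O O + n O O * alpha (1 * dt)))) by ring.
    rewrite Rabs_mult, (Rabs_pos_eq (dt / 2)) by exact Hdt2. apply Rmult_le_compat_l; [exact Hdt2|].
    eapply Rle_trans; [apply Rabs_triang|].
    eapply Rle_trans; [apply Rplus_le_compat_l, Rabs_triang|].
    rewrite !Rabs_mult, (Rabs_pos_eq A) by exact HA.
    assert (A * Rabs (n O O) <= A * (P * N)) by (apply Rmult_le_compat_l; [exact HA|apply Hbdry]).
    assert (Rabs (n O O) * Rabs (alpha (1 * dt)) <= P * N * B).
    { apply Rmult_le_compat; try apply Rabs_pos; [apply Hbdry|]. apply Halpha_bound. lra. }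
    assert (0 <= P * N * V) by (repeat apply Rmult_le_pos; assumption). nra.
  - rewrite !X_recursion.
    replace (dt / 2 * (A * n (S (S m)) O + memory (S m)) - dt / 2 * (A * n (S m) O + memory m)) with
      (dt / 2 * (A * (n (S (S m)) O - n (S m) O) + (memory (S m) - memory m))) by ring.
    rewrite Rabs_mult, (Rabs_pos_eq (dt / 2)) by exact Hdt2. apply Rmult_le_compat_l; [exact Hdt2|].
    eapply Rle_trans; [apply Rabs_triang|].
    rewrite Rabs_mult, (Rabs_pos_eq A) by exact HA.
    assert (H := memory_increment m).
    assert (0 <= A * (P * N)) by (repeat apply Rmult_le_pos; assumption). nra.
Qed.

(* The boundary value moves by [O(dt)], given the total variation [T] of [n^m]: the
   implicit equation for [X] is absorbed thanks to [dt A G N <= 1]. *)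
Lemma boundary_increment (m : nat) (T : R) : is_series (jump (n m)) T ->
  Rabs (n (S m) O - n m O) <=
    dt * (G * N * A * P * T + G * N * A * P * P * N + G * N * memory_source P A B V N
          + P * T + P * P * N).
Proof.
  intro HT. assert (HT0 : 0 <= T) by exact (series_nonneg _ _ (fun j => Rabs_pos _) HT).
  assert (HA : 0 <= A) by exact A_nonneg.
  destruct (mass_bound m) as [M [HM HMN]]. destruct (mass_bound (S m)) as [M' [HM' HM'N]].
  set (K0 := memory_source P A B V N).
  assert (HK0 : 0 <= K0) by (unfold K0, memory_source; repeat apply Rmult_le_pos; lra).
  set (x := Rabs (X (S m) - X m)). set (y := Rabs (n (S m) O - n m O)).
  assert (Hx0 : 0 <= x) by apply Rabs_pos.
  assert (Hy : y <= G * N * x + P * dt * T + P * dt * P * N).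
  { assert (H := upwind_boundary_diff ds dt P (q m) (n m) (n (S m)) Hds Hdt (q_range m)
                   (scheme_update m) (q (S m)) G x M M' T Hx0 (q_abs (S m))
                   (fun j Hj => q_lip_time m (S m) j Hj) HM' HM HT).
    unfold y. rewrite (boundary_as_series (S m)), (boundary_as_series m).
    assert (G * x * M' <= G * x * N) by (apply Rmult_le_compat_l; [apply Rmult_le_pos|]; lra).
    assert (P * dt * P * M <= P * dt * P * N)
      by (apply Rmult_le_compat_l; repeat apply Rmult_le_pos; lra).
    lra. }
  assert (Hx : x <= dt * (A * P * (T + P * N) + K0)).
  { assert (HX := X_increment m). fold x y K0 in HX.
    assert (HAy : A * y <= A * (G * N * x) + A * (P * dt * (T + P * N))).
    { rewrite <- Rmult_plus_distr_l. apply Rmult_le_compat_l; [exact A_nonneg|]. nra. }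
    assert (Habsorb : dt * (A * (G * N * x)) <= x).
    { replace (dt * (A * (G * N * x))) with (dt * (A * G * N) * x) by ring.
      rewrite <- (Rmult_1_l x) at 2. apply Rmult_le_compat_r; [exact Hx0|exact Hdt_memory]. }
    assert (Hsmall : dt * (A * (P * dt * (T + P * N))) <= dt * (A * P * (T + P * N))).
    { replace (dt * (A * (P * dt * (T + P * N)))) with (dt * (A * P * (T + P * N)) * dt) by ring.
      rewrite <- (Rmult_1_r (dt * (A * P * (T + P * N)))) at 2.
      apply Rmult_le_compat_l; [|lra].
      assert (0 <= P * N) by (apply Rmult_le_pos; lra).
      repeat apply Rmult_le_pos; lra. }
    assert (dt * (A * y) <= dt * (A * (G * N * x)) + dt * (A * (P * dt * (T + P * N))))
      by (rewrite <- Rmult_plus_distr_l; apply Rmult_le_compat_l; lra).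
    lra. }
  assert (G * N * x <= G * N * (dt * (A * P * (T + P * N) + K0)))
    by (apply Rmult_le_compat_l; [apply Rmult_le_pos|]; lra).
  fold y. nra.
Qed.

Lemma tv_step (m : nat) : is_finite (TV (n m)) ->
  is_finite (TV (n (S m))) /\
  real (TV (n (S m))) <= real (TV (n m))
    + dt * (tv_rate P G A N * real (TV (n m)) + tv_source P G L A B V N).
Proof.
  intro Hfin. set (T := real (TV (n m))). assert (HA : 0 <= A) by exact A_nonneg.
  assert (HT : is_series (jump (n m)) T) by exact (TV_is_series _ Hfin).
  assert (HT0 : 0 <= T) by exact (TV_nonneg _ Hfin).
  destruct (mass_bound m) as [M [HM HMN]].
  destruct (upwind_tv ds dt P (q m) (n m) (n (S m)) Hds Hdt Hcfl (q_range m) (scheme_update m)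
              L T M HL (q_lip_cell m) HT HM) as [Hfin' Htv].
  split; [exact Hfin'|].
  assert (Hy := boundary_increment m T HT).
  assert (Hfirst : Rabs (n m 1%nat) <= P * N + T).
  { assert (Hj0 : jump (n m) O <= T)
      by exact (partial_sum_le_series _ _ O (fun j => Rabs_pos _) HT).
    unfold jump in Hj0. assert (Hb := boundary_bound m).
    replace (n m 1%nat) with (n m O + (n m 1%nat - n m O)) by ring.
    eapply Rle_trans; [apply Rabs_triang|]. lra. }
  assert (dt * P * Rabs (n m 1%nat) <= dt * P * (P * N + T))
    by (apply Rmult_le_compat_l; [apply Rmult_le_pos|]; lra).
  assert (dt * L * M <= dt * L * N) by (apply Rmult_le_compat_l; [apply Rmult_le_pos|]; lra).
  assert (0 <= G * N * A * P * T) by (repeat apply Rmult_le_pos; lra).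
  assert (0 <= dt * T) by (apply Rmult_le_pos; lra).
  unfold tv_rate, tv_source. fold T. nra.
Qed.

Lemma tv_estimate : is_finite (TV (n O)) ->
  forall m, is_finite (TV (n m)) /\
    real (TV (n m)) <= exp (tv_rate P G A N * (INR m * dt)) * real (TV (n O))
      + tv_source P G L A B V N / tv_rate P G A N * (exp (tv_rate P G A N * (INR m * dt)) - 1).
Proof.
  intros HTV0.
  assert (Hfin : forall m, is_finite (TV (n m)))
    by (induction m; [exact HTV0|apply tv_step; assumption]).
  intro m. split; [apply Hfin|].
  apply (discrete_gronwall (fun k => real (TV (n k)))).
  - apply tv_rate_pos; [exact HP|exact HG|exact A_nonneg|exact HN].
  - apply Rlt_le, tv_source_pos;
      [exact HP|exact HG|exact HL|exact A_nonneg|exact HB|exact HV|exact HN].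
  - lra.
  - exact (TV_nonneg _ HTV0).
  - intro k. apply tv_step, Hfin.
Qed.

End DDMEstimates.

Lemma small_time_step (a dt : R) : 0 <= a -> dt <= 1 / (1 + a) -> dt <= 1 /\ dt * a <= 1.
Proof.
  intros Ha Hdt. assert (Hpos : 0 < 1 + a) by lra.
  assert (H : dt * (1 + a) <= 1).
  { apply Rle_trans with (1 / (1 + a) * (1 + a)); [apply Rmult_le_compat_r; lra|].
    right. field. lra. }
  split; nra.
Qed.

(* The theorem, with [tau0 = 1 / (1 + alpha_0 G N)], [C1 = tv_rate] and [C2 = tv_source / C1],
   where [N = |N1|]. *)
Theorem mainTheorem13 :
  forall (p : R -> R -> R) (alpha : R -> R),
    W1inf p ->
    (forall s x, 0 <= s -> 0 <= x -> 0 <= p s x) ->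
    (forall t, 0 <= t -> 0 <= alpha t) ->
    bounded_on_Rplus alpha ->
    BV_on_Rplus alpha ->
  forall N1 Ninf : R,
  exists tau0 C1 C2 : R, 0 < tau0 /\ 0 < C1 /\ 0 < C2 /\
    forall (ds dt : R) (n0 : nat -> R) (n : nat -> nat -> R) (X : nat -> R),
      0 < ds -> 0 < dt ->
      (forall j, (1 <= j)%nat -> 0 <= n0 j) ->
      ex_series (fun k => ds * Rabs (n0 (S k))) ->
      Series (fun k => ds * Rabs (n0 (S k))) = N1 ->
      Lub_Rbar (fun r => exists j, (1 <= j)%nat /\ r = Rabs (n0 j)) = Finite Ninf ->
      DDM_scheme p alpha ds dt n0 n X ->
      is_finite (TV (n O)) ->
      dt <= tau0 ->
      (* DDM CFL condition *)
      dt * (1 / ds + real (p_sup p)) < 1 ->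
      dt * (alpha 0 * real (dXp_sup p) * N1) < 2 ->
      forall m : nat,
        Rbar_le (TV (n m))
          (Finite (exp (C1 * (INR m * dt)) * real (TV (n O))
                   + C2 * (exp (C1 * (INR m * dt)) - 1))).
Proof.
  intros p alpha HW Hp_nonneg Halpha_nonneg Halpha_bdd Halpha_BV N1 Ninf.
  destruct (p_sup_spec p HW) as [HP Hp_bound].
  destruct (dXp_sup_spec p HW) as [HG Hp_lipX].
  destruct (W1inf_lipschitz p HW) as [L [HL Hp_lip]].
  destruct (bounded_on_Rplus_nonneg alpha Halpha_bdd) as [B [HB Halpha_bound]].
  destruct (BV_on_Rplus_nonneg alpha Halpha_BV) as [V [HV Halpha_var]].
  set (P := real (p_sup p)) in *. set (G := real (dXp_sup p)) in *.
  set (A := alpha 0). set (N := Rabs N1).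
  assert (HA : 0 <= A) by (apply Halpha_nonneg; lra).
  assert (HN : 0 <= N) by apply Rabs_pos.
  assert (Hrate := tv_rate_pos P G A N HP HG HA HN).
  assert (HAGN : 0 <= A * G * N) by (repeat apply Rmult_le_pos; assumption).
  exists (1 / (1 + A * G * N)), (tv_rate P G A N), (tv_source P G L A B V N / tv_rate P G A N).
  split; [apply Rdiv_lt_0_compat; lra|]. split; [exact Hrate|].
  split; [apply Rdiv_lt_0_compat; [apply tv_source_pos|]; assumption|].
  intros ds dt n0 n X Hds Hdt _ Hex HN1 _ Hscheme HTV0 Htau Hcfl _ m.
  destruct (small_time_step (A * G * N) dt HAGN Htau) as [Hdt1 Hdt_memory].
  assert (Hmass : Series (fun k => ds * Rabs (n0 (S k))) <= N) by (rewrite HN1; apply Rle_abs).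
  destruct (tv_estimate p alpha ds dt n0 n X P G L B V N Hscheme Hds Hdt Hdt1 Hcfl Hdt_memory
              Hp_nonneg Hp_bound Hp_lipX Hp_lip Halpha_nonneg Halpha_bound Halpha_var
              HP HG HL HB HV HN Hex Hmass HTV0 m) as [Hfin Hbound].
  rewrite <- Hfin. exact Hbound.
Qed.
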